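(* Let $(N_m)_{m\ge0}$ be positive integers with $N_0=N$, for each $m\ge1$ let $W_m:\mathbb{R}^{N_{m-1}}\to\mathbb{C}^{N_m}$ be linear with $W_m^*W_m=\mathrm{Id}$, and for each $m\ge0$ let $A_m$ be a block-averaging operator on $\mathbb{R}^{N_m}$. Let $X$ be a random vector in $\mathbb{R}^N$ with $E(\|X\|^2)<\infty$, let $(X_m)_{m\ge0}$ be its expected scattering layers and let $(\tilde X_m)_{m\ge0}$ be its averaged scattering layers (computed realization-wise, with the same $W_m$ and the $A_m$). Then for every $m\ge0$, $$E\big(\|A_m\tilde X_m-E(X_m)\|^2\big)\le\Big(\sum_{n=0}^m E\big(\|A_nX_n-E(X_n)\|^2\big)^{1/2}\Big)^2.$$
   Context: For $z\in\mathbb{C}^n$, $|z|$ denotes the vector of coordinatewise complex moduli; $\|\cdot\|$ is the Euclidean norm. Expected scattering layers: $X_0=X$, $X_{m+1}=|W_{m+1}(X_m-E(X_m))|$. A block-averaging operator $A_m$ on $\mathbb{R}^{N_m}$ is associated with a partition $\{B_{j,m}\}_j$ of $\{1,\dots,N_m\}$ into nonempty blocks, and is defined by $(A_mv)(n)=\frac{1}{|B_{j,m}|}\sum_{k\in B_{j,m}}v(k)$ for $n\in B_{j,m}$. Averaged scattering layers: $\tilde X_0=X$, $\tilde X_{m+1}=|W_{m+1}(\tilde X_m-A_m\tilde X_m)|$. *)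

From HB Require Import structures.
From mathcomp Require Import all_boot all_order all_algebra.
From mathcomp Require Import all_classical all_reals all_analysis.
From mathcomp.real_closed Require Import complex.
Set Implicit Arguments. Unset Strict Implicit. Unset Printing Implicit Defensive.
Import Order.TTheory GRing.Theory Num.Theory.
Local Open Scope ring_scope.

Section Defs.
Context {R : realType}.

Definition sqnorm n (v : 'cV[R]_n) : R := \sum_(i < n) v i 0 ^+ 2.

Definition toCv n (v : 'cV[R]_n) : 'cV[R[i]]_n := map_mx (fun x => (x%:C)%C) v.

Definition cmod n (z : 'cV[R[i]]_n) : 'cV[R]_n := map_mx (@ComplexField.Normc.normc R) z.

(* W : R^n -> C^m (R-linear, given by a complex matrix) satisfies W^* W = Id,
   where W^* is the adjoint of W for the real inner products
   <u,v> = Re (sum_k conj(u_k) v_k) on C^m and the usual one on R^n;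
   its matrix is Re (conj(W)^T W). *)
Definition adjoint_isometry m n (W : 'M[R[i]]_(m, n)) : Prop :=
  map_mx (@complex.Re R) ((map_mx (@conjc R) W)^T *m W) = 1%:M.

Definition block_partition n (P : {set {set 'I_n}}) : Prop :=
  finset.partition P [set: 'I_n].

Definition block_avg n (P : {set {set 'I_n}}) (v : 'cV[R]_n) : 'cV[R]_n :=
  \col_i ((\sum_(k in finset.pblock P i) v k 0) / (#|finset.pblock P i|)%:R).

Context {d : measure_display} {T : measurableType d} (Pr : probability T R).

Definition Evec n (Y : T -> 'cV[R]_n) : 'cV[R]_n :=
  \col_i fine (\int[Pr]_t (Y t i 0)%:E)%E.

Variables (Nn : nat -> nat) (W : forall m, 'M[R[i]]_(Nn m.+1, Nn m))
  (A : forall m, {set {set 'I_(Nn m)}}) (X : T -> 'cV[R]_(Nn 0)).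

Fixpoint exp_layer (m : nat) : T -> 'cV[R]_(Nn m) :=
  match m return T -> 'cV[R]_(Nn m) with
  | 0 => X
  | m'.+1 => fun t => cmod (W m' *m toCv (exp_layer m' t - Evec (exp_layer m')))
  end.

Fixpoint avg_layer (m : nat) : T -> 'cV[R]_(Nn m) :=
  match m return T -> 'cV[R]_(Nn m) with
  | 0 => X
  | m'.+1 => fun t =>
      cmod (W m' *m toCv (avg_layer m' t - block_avg (A m') (avg_layer m' t)))
  end.

End Defs.

From HB Require Import structures.
From mathcomp Require Import all_boot all_order all_algebra.
From mathcomp Require Import all_classical all_reals all_analysis.
From mathcomp.real_closed Require Import complex.
From mathcomp Require Import ring lra measurable_realfun.
Set Implicit Arguments. Unset Strict Implicit. Unset Printing Implicit Defensive.
Import Order.TTheory GRing.Theory Num.Theory.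
Local Open Scope ring_scope.

(* Write Y_k for the averaged layers, X_k for the expected ones and c_k for
   E(X_k).  Block averaging is an orthogonal projection, and v |-> |W v| is
   1-Lipschitz because W is an isometry and the complex modulus is 1-Lipschitz.
   Hence, realization-wise,
     ||Y_{k+1} - X_{k+1}|| <= ||(I - A_k)(Y_k - X_k) - (A_k X_k - c_k)||
                           <= ||Y_k - X_k|| + ||A_k X_k - c_k||,
   and likewise ||A_m Y_m - c_m|| <= ||Y_m - X_m|| + ||A_m X_m - c_m||.
   Minkowski's inequality in L^2(P) turns these into a telescoping bound on
   root-mean-square norms. *)

Section EuclideanNorm.
Context {R : realType}.

Lemma sqnorm_ge0 n (v : 'cV[R]_n) : 0 <= sqnorm v.
Proof. by apply: sumr_ge0 => i _; exact: sqr_ge0. Qed.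

Lemma sqnormE n (v : 'cV[R]_n) : sqnorm v = (v^T *m v) 0 0.
Proof. by rewrite mxE; apply: eq_bigr => i _; rewrite !mxE expr2. Qed.

Lemma sqnorm_mulmx m n (M : 'M[R]_(m, n)) v :
  sqnorm (M *m v) = (v^T *m (M^T *m M) *m v) 0 0.
Proof. by rewrite sqnormE trmx_mul !mulmxA. Qed.

(* Lagrange's identity: the defect of Cauchy-Schwarz is half of
   [\sum_i \sum_j (x i * y j - x j * y i) ^+ 2]. *)
Lemma sum_mul_sqr_le n (x y : 'I_n -> R) :
  (\sum_i x i * y i) ^+ 2 <= (\sum_i x i ^+ 2) * (\sum_i y i ^+ 2).
Proof.
have lagrange : \sum_i \sum_j (x i * y j - x j * y i) ^+ 2 =
    \sum_i \sum_j x i ^+ 2 * y j ^+ 2 + \sum_i \sum_j y i ^+ 2 * x j ^+ 2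
    - 2 * \sum_i \sum_j (x i * y i) * (x j * y j).
  rewrite mulr_sumr -big_split -sumrB; apply: eq_bigr => i _ /=.
  rewrite mulr_sumr -big_split -sumrB; apply: eq_bigr => j _ /=; ring.
have : 0 <= \sum_i \sum_j (x i * y j - x j * y i) ^+ 2.
  by do 2!(apply: sumr_ge0 => ? _); exact: sqr_ge0.
rewrite lagrange -!big_distrlr /= expr2; lra.
Qed.

Definition vnorm n (v : 'cV[R]_n) := Num.sqrt (sqnorm v).

Lemma vnorm_ge0 n (v : 'cV[R]_n) : 0 <= vnorm v.
Proof. exact: sqrtr_ge0. Qed.

Lemma sqr_vnorm n (v : 'cV[R]_n) : vnorm v ^+ 2 = sqnorm v.
Proof. by rewrite sqr_sqrtr // sqnorm_ge0. Qed.

Lemma ler_vnorm n n' (v : 'cV[R]_n) (w : 'cV[R]_n') :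
  sqnorm v <= sqnorm w -> vnorm v <= vnorm w.
Proof. by move=> le_vw; rewrite ler_sqrt // sqnorm_ge0. Qed.

Lemma vnorm0 n : vnorm (0 : 'cV[R]_n) = 0.
Proof. by rewrite /vnorm /sqnorm big1 ?sqrtr0 // => i _; rewrite mxE expr0n. Qed.

Lemma vnormN n (v : 'cV[R]_n) : vnorm (- v) = vnorm v.
Proof.
by rewrite /vnorm /sqnorm; congr Num.sqrt; apply: eq_bigr => i _; rewrite mxE sqrrN.
Qed.

Lemma vnormD n (v w : 'cV[R]_n) : vnorm (v + w) <= vnorm v + vnorm w.
Proof.
have sqnormD : sqnorm (v + w) = sqnorm v + sqnorm w + 2 * \sum_i v i 0 * w i 0.
  rewrite /sqnorm mulr_sumr -!big_split; apply: eq_bigr => i _ /=.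
  rewrite mxE; ring.
have dot_le : \sum_i v i 0 * w i 0 <= vnorm v * vnorm w.
  rewrite -sqrtrM ?sqnorm_ge0 //; apply: le_trans (ler_norm _) _.
  by rewrite -sqrtr_sqr ler_sqrt ?mulr_ge0 ?sqnorm_ge0 // sum_mul_sqr_le.
rewrite -(ger0_norm (addr_ge0 (vnorm_ge0 v) (vnorm_ge0 w))) -sqrtr_sqr.
rewrite ler_sqrt ?sqr_ge0 // sqnormD sqrrD !sqr_vnorm; lra.
Qed.

Lemma vnormB n (v w : 'cV[R]_n) : vnorm (v - w) <= vnorm v + vnorm w.
Proof. by rewrite -(vnormN w); apply: vnormD. Qed.

End EuclideanNorm.

Local Notation pblock := finset.pblock.

Section BlockAverage.
Variables (R : realType) (n : nat) (P : {set {set 'I_n}}).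
Implicit Types v : 'cV[R]_n.

Definition block_avg_mx : 'M[R]_n :=
  \matrix_(i, k) (if k \in pblock P i then #|pblock P i|%:R^-1 else 0).

Lemma block_avgE v : block_avg P v = block_avg_mx *m v.
Proof.
apply/matrixP => i j; rewrite !mxE (ord1 j) big_mkcond mulr_suml.
by apply: eq_bigr => k _; rewrite mxE; case: ifP; rewrite ?mul0r // mulrC.
Qed.

Lemma block_avgB (v w : 'cV[R]_n) :
  block_avg P (v - w) = block_avg P v - block_avg P w.
Proof. by rewrite !block_avgE mulmxBr. Qed.

Hypothesis partP : block_partition P.

Lemma mem_pblock_self i : i \in pblock P i.
Proof.
by case/and3P: partP => /eqP coverP _ _; rewrite finset.mem_pblock coverP inE.
Qed.

Lemma pblock_eq k i : k \in pblock P i -> pblock P k = pblock P i.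
Proof. by case/and3P: partP => _ trivP _; apply: finset.same_pblock. Qed.

Lemma mem_pblock_sym k i : (k \in pblock P i) = (i \in pblock P k).
Proof. by apply/idP/idP => /pblock_eq ->; rewrite mem_pblock_self. Qed.

Lemma sum_mul_block_avg (w : 'I_n -> R) v :
  (forall i k, k \in pblock P i -> w k = w i) ->
  \sum_i w i * block_avg P v i 0 = \sum_i w i * v i 0.
Proof.
move=> w_const.
pose F k := w k * v k 0 / #|pblock P k|%:R.
transitivity (\sum_i \sum_(k in pblock P i) F k).
  apply: eq_bigr => i _; rewrite mxE mulrA mulr_sumr mulr_suml.
  by apply: eq_bigr => k ki; rewrite /F (pblock_eq ki) (w_const i k ki).
rewrite (exchange_big_dep xpredT) //=; apply: eq_bigr => k _.
rewrite (eq_bigl (mem (pblock P k))) => [|i]; last by rewrite mem_pblock_sym.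
have cardP : #|pblock P k|%:R != 0 :> R.
  by rewrite pnatr_eq0 -lt0n; apply/card_gt0P; exists k; exact: mem_pblock_self.
by rewrite sumr_const -mulr_natr /F divfK.
Qed.

Lemma sqnorm_block_avg_pythagoras v :
  sqnorm v = sqnorm (v - block_avg P v) + sqnorm (block_avg P v).
Proof.
set a := block_avg P v.
have orth : \sum_i a i 0 * v i 0 = sqnorm a.
  rewrite -(@sum_mul_block_avg (fun i => a i 0)) => [|i k ki]; last first.
    by rewrite !mxE (pblock_eq ki).
  by apply: eq_bigr => i _; rewrite expr2.
have expand : sqnorm (v - a) = sqnorm v - 2 * \sum_i a i 0 * v i 0 + sqnorm a.
  rewrite /sqnorm mulr_sumr -sumrB -big_split; apply: eq_bigr => i _ /=.
  rewrite !mxE; ring.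
by rewrite expand orth; ring.
Qed.

Lemma sqnorm_block_avg_le v : sqnorm (block_avg P v) <= sqnorm v.
Proof. by rewrite [leRHS]sqnorm_block_avg_pythagoras lerDr sqnorm_ge0. Qed.

Lemma sqnorm_sub_block_avg_le v : sqnorm (v - block_avg P v) <= sqnorm v.
Proof. by rewrite [leRHS]sqnorm_block_avg_pythagoras lerDl sqnorm_ge0. Qed.

End BlockAverage.

Section ModulusOfIsometry.
Variables (R : realType) (m n : nat).
Local Notation re := (map_mx (@complex.Re R)).
Local Notation im := (map_mx (@complex.Im R)).

Lemma cmodE (z : 'cV[R[i]]_m) i :
  cmod z i 0 = Num.sqrt (complex.Re (z i 0) ^+ 2 + complex.Im (z i 0) ^+ 2).
Proof. by rewrite mxE; case: (z i 0). Qed.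

Lemma sqnorm_cmod (z : 'cV[R[i]]_m) :
  sqnorm (cmod z) = sqnorm (re z) + sqnorm (im z).
Proof.
rewrite /sqnorm -big_split; apply: eq_bigr => i _ /=.
by rewrite cmodE sqr_sqrtr ?addr_ge0 ?sqr_ge0 // !mxE.
Qed.

Lemma sqnorm_cmodB_le (z w : 'cV[R[i]]_m) :
  sqnorm (cmod z - cmod w) <= sqnorm (cmod (z - w)).
Proof.
(* [normc] is the norm of the normed module [Rcomplex R]. *)
apply: ler_sum => i _; rewrite !mxE -[leLHS]real_normK ?num_real //.
rewrite ler_sqr ?nnegrE ?normr_ge0 //; last exact: (@normr_ge0 _ (Rcomplex R)).
exact: (ler_dist_dist (z i 0 : Rcomplex R) (w i 0)).
Qed.

Lemma toCvB (v w : 'cV[R]_n) : toCv (v - w) = toCv v - toCv w.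
Proof. by apply/matrixP => i j; rewrite !mxE rmorphB. Qed.

Variable W : 'M[R[i]]_(m, n).

Lemma Re_mulmx_toCv v : re (W *m toCv v) = re W *m v.
Proof.
apply/matrixP => i j; rewrite !mxE raddf_sum; apply: eq_bigr => k _.
by rewrite !mxE; case: (W i k) => a b /=; ring.
Qed.

Lemma Im_mulmx_toCv v : im (W *m toCv v) = im W *m v.
Proof.
apply/matrixP => i j; rewrite !mxE raddf_sum; apply: eq_bigr => k _.
by rewrite !mxE; case: (W i k) => a b /=; ring.
Qed.

Lemma Re_conjT_mulmx :
  re ((map_mx (@conjc R) W)^T *m W) = (re W)^T *m re W + (im W)^T *m im W.
Proof.
apply/matrixP => j k; rewrite !mxE raddf_sum -big_split; apply: eq_bigr => i _.
by rewrite !mxE; case: (W i j) => a b; case: (W i k) => c d /=; ring.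
Qed.

Hypothesis isoW : adjoint_isometry W.

Lemma sqnorm_cmod_isometry v : sqnorm (cmod (W *m toCv v)) = sqnorm v.
Proof.
rewrite sqnorm_cmod Re_mulmx_toCv Im_mulmx_toCv !sqnorm_mulmx.
have addE (M N : 'M[R]_1) : M 0 0 + N 0 0 = (M + N) 0 0 by rewrite mxE.
rewrite addE -mulmxDl -mulmxDr -Re_conjT_mulmx.
by move: isoW; rewrite /adjoint_isometry => ->; rewrite mulmx1 sqnormE.
Qed.

Lemma cmod_mulmx_nonexpansive v w :
  vnorm (cmod (W *m toCv v) - cmod (W *m toCv w)) <= vnorm (v - w).
Proof.
apply: ler_vnorm; apply: le_trans (sqnorm_cmodB_le _ _) _.
by rewrite -mulmxBr -toCvB sqnorm_cmod_isometry.
Qed.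

End ModulusOfIsometry.

Section ScatteringStep.
Variables (R : realType) (m n : nat) (W : 'M[R[i]]_(m, n)) (P : {set {set 'I_n}}).
Hypotheses (isoW : adjoint_isometry W) (partP : block_partition P).
Implicit Types x y c : 'cV[R]_n.

Lemma vnorm_block_avgB_le y x c :
  vnorm (block_avg P y - c) <= vnorm (y - x) + vnorm (block_avg P x - c).
Proof.
have -> : block_avg P y - c = block_avg P (y - x) + (block_avg P x - c).
  by rewrite block_avgB addrA subrK.
apply: le_trans (vnormD _ _) _; rewrite lerD2r.
exact/ler_vnorm/sqnorm_block_avg_le.
Qed.

Lemma vnorm_scattering_stepB_le y x c :
  vnorm (cmod (W *m toCv (y - block_avg P y)) - cmod (W *m toCv (x - c)))
  <= vnorm (y - x) + vnorm (block_avg P x - c).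
Proof.
apply: le_trans (cmod_mulmx_nonexpansive isoW _ _) _.
have -> : y - block_avg P y - (x - c) =
          (y - x) - block_avg P (y - x) - (block_avg P x - c).
  by rewrite block_avgB; apply/matrixP => i j; rewrite !mxE; ring.
apply: le_trans (vnormB _ _) _; rewrite lerD2r.
exact/ler_vnorm/sqnorm_sub_block_avg_le.
Qed.

End ScatteringStep.

Section RandomVectors.
Context {R : realType} {d : measure_display} {T : measurableType d}.

Definition measurable_vec n (v : T -> 'cV[R]_n) :=
  forall i, measurable_fun setT (fun t => v t i 0).

Lemma measurable_vec_cst n (c : 'cV[R]_n) : measurable_vec (fun=> c).
Proof. by move=> i; exact: measurable_cst. Qed.

Lemma measurable_vecB n (v w : T -> 'cV[R]_n) :
  measurable_vec v -> measurable_vec w -> measurable_vec (fun t => v t - w t).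
Proof.
move=> mv mw i; rewrite (_ : (fun t => _) = (fun t => v t i 0 - w t i 0)).
  exact: measurable_funB.
by apply/funext => t; rewrite !mxE.
Qed.

Lemma measurable_vec_mulmx m n (M : 'M[R]_(m, n)) (v : T -> 'cV[R]_n) :
  measurable_vec v -> measurable_vec (fun t => M *m v t).
Proof.
move=> mv i; rewrite (_ : (fun t => _) = (fun t => \sum_j M i j * v t j 0)).
  by apply: measurable_sum => j; apply: measurable_funM.
by apply/funext => t; rewrite mxE.
Qed.

Lemma measurable_vec_block_avg n (P : {set {set 'I_n}}) (v : T -> 'cV[R]_n) :
  measurable_vec v -> measurable_vec (fun t => block_avg P (v t)).
Proof.
move=> mv; rewrite (_ : (fun t => _) = (fun t => block_avg_mx R P *m v t)).
  exact: measurable_vec_mulmx.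
by apply/funext => t; rewrite block_avgE.
Qed.

Lemma measurable_sqrt (f : T -> R) :
  measurable_fun setT f -> measurable_fun setT (fun t => Num.sqrt (f t)).
Proof.
exact: measurableT_comp (continuous_measurable_fun (@sqrt_continuous R)).
Qed.

Lemma measurable_vec_cmod m n (W : 'M[R[i]]_(m, n)) (v : T -> 'cV[R]_n) :
  measurable_vec v -> measurable_vec (fun t => cmod (W *m toCv (v t))).
Proof.
move=> mv i.
have ReE t :
    complex.Re ((W *m toCv (v t)) i 0) = (map_mx (@complex.Re R) W *m v t) i 0.
  by rewrite -Re_mulmx_toCv [RHS]mxE.
have ImE t :
    complex.Im ((W *m toCv (v t)) i 0) = (map_mx (@complex.Im R) W *m v t) i 0.
  by rewrite -Im_mulmx_toCv [RHS]mxE.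
under eq_fun do rewrite cmodE ReE ImE.
apply: measurable_sqrt; apply: measurable_funD; apply: measurable_funX;
  exact: measurable_vec_mulmx.
Qed.

Lemma measurable_vnorm n (v : T -> 'cV[R]_n) :
  measurable_vec v -> measurable_fun setT (fun t => vnorm (v t)).
Proof.
move=> mv; apply: measurable_sqrt; apply: measurable_sum => i.
exact: measurable_funX.
Qed.

Local Open Scope ereal_scope.
Variable P : probability T R.

Definition rms (f : T -> R) := sqrte (\int[P]_t ((f t ^+ 2)%R)%:E).

Lemma rms_Lnorm (f : T -> R) : rms f = 'N[P]_2%:E[EFin \o f].
Proof.
rewrite unlock /rms -poweR12_sqrt; last first.
  by apply: integral_ge0 => t _; rewrite lee_fin sqr_ge0.
congr (_ `^ _); apply: eq_integral => t _ /=.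
by rewrite (@powR_mulrn _ _ 2) ?normr_ge0 // real_normK // num_real.
Qed.

Lemma rms_ge0 (f : T -> R) : 0 <= rms f.
Proof. exact: sqrte_ge0. Qed.

Lemma le_rms (f g : T -> R) : measurable_fun setT f -> measurable_fun setT g ->
  (forall t, 0 <= f t <= g t)%R -> rms f <= rms g.
Proof.
move=> mf mg fg; rewrite /rms lee_sqrt; last first.
  by apply: integral_ge0 => t _; rewrite lee_fin sqr_ge0.
apply: ge0_le_integral => //.
- by move=> t _; rewrite lee_fin sqr_ge0.
- by apply/measurable_EFinP; exact: measurable_funX.
- by apply/measurable_EFinP; exact: measurable_funX.
- move=> t _; rewrite lee_fin; have /andP[f0 fg_t] := fg t.
  by rewrite ler_pXn2r // ?nnegrE // (le_trans f0 fg_t).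
Qed.

Lemma rmsD (f g : T -> R) : measurable_fun setT f -> measurable_fun setT g ->
  rms (fun t => f t + g t)%R <= rms f + rms g.
Proof. by move=> mf mg; rewrite !rms_Lnorm; apply: minkowski_EFin; rewrite ?ler1n. Qed.

Lemma rms_vnorm n (v : T -> 'cV[R]_n) :
  rms (fun t => vnorm (v t)) = sqrte (\int[P]_t (sqnorm (v t))%:E).
Proof. by congr sqrte; apply: eq_integral => t _; rewrite sqr_vnorm. Qed.

Lemma integral_sqnorm n (v : T -> 'cV[R]_n) :
  \int[P]_t (sqnorm (v t))%:E = rms (fun t => vnorm (v t)) * rms (fun t => vnorm (v t)).
Proof.
rewrite rms_vnorm -expe2 sqr_sqrte //.
by apply: integral_ge0 => t _; rewrite lee_fin sqnorm_ge0.
Qed.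

End RandomVectors.

Section ScatteringLayers.
Context {R : realType} {d : measure_display} {T : measurableType d}.
Variables (P : probability T R) (Nn : nat -> nat)
  (W : forall m, 'M[R[i]]_(Nn m.+1, Nn m)) (A : forall m, {set {set 'I_(Nn m)}})
  (X : T -> 'cV[R]_(Nn 0)).
Hypotheses (isoW : forall m, adjoint_isometry (W m))
  (partA : forall m, block_partition (A m)) (mX : measurable_vec X).

Local Notation Xm := (exp_layer P W X).
Local Notation Ym := (avg_layer W A X).

Lemma measurable_layers k : measurable_vec (Xm k) /\ measurable_vec (Ym k).
Proof.
elim: k => [|k [mXk mYk]] //.
by split; apply: measurable_vec_cmod; apply: measurable_vecB => //;
  exact: measurable_vec_block_avg.
Qed.

Let gap k t := vnorm (Ym k t - Xm k t).
Let dev k t := vnorm (block_avg (A k) (Xm k t) - Evec P (Xm k)).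

Let measurable_gap k : measurable_fun setT (gap k).
Proof.
by have [mXk mYk] := measurable_layers k; exact/measurable_vnorm/measurable_vecB.
Qed.

Let measurable_dev k : measurable_fun setT (dev k).
Proof.
have [mXk _] := measurable_layers k.
by apply/measurable_vnorm/measurable_vecB;
  [exact: measurable_vec_block_avg | exact: measurable_vec_cst].
Qed.

Lemma gap_succ_le k t : gap k.+1 t <= gap k t + dev k t.
Proof. exact: vnorm_scattering_stepB_le. Qed.

Lemma avg_dev_le k t :
  vnorm (block_avg (A k) (Ym k t) - Evec P (Xm k)) <= gap k t + dev k t.
Proof. exact: vnorm_block_avgB_le. Qed.

Local Open Scope ereal_scope.

Lemma rms_gap_le k : rms P (gap k) <= \sum_(n < k) rms P (dev n).
Proof.
elim: k => [|k IH].
  rewrite big_ord0 /rms (eq_integral (fun=> 0)) ?integral0 ?sqrte0 // => t _.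
  by rewrite /gap subrr vnorm0 expr0n.
rewrite big_ord_recr /=; apply: (le_trans _ (leeD IH (lexx (rms P (dev k))))).
apply: (le_trans _ (rmsD P (measurable_gap k) (measurable_dev k))).
apply: le_rms => // [|t]; first exact: measurable_funD.
by rewrite vnorm_ge0 gap_succ_le.
Qed.

Lemma rms_avg_dev_le k :
  rms P (fun t => vnorm (block_avg (A k) (Ym k t) - Evec P (Xm k)))
  <= \sum_(n < k.+1) rms P (dev n).
Proof.
rewrite big_ord_recr /=; apply: (le_trans _ (leeD (rms_gap_le k) (lexx _))).
apply: (le_trans _ (rmsD P (measurable_gap k) (measurable_dev k))).
have [mXk mYk] := measurable_layers k.
apply: le_rms => [| |t]; last by rewrite vnorm_ge0 avg_dev_le.
- by apply/measurable_vnorm/measurable_vecB;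
  [exact: measurable_vec_block_avg | exact: measurable_vec_cst].
- exact: measurable_funD.
Qed.

End ScatteringLayers.

Theorem proposition1 (R : realType) (d : measure_display) (T : measurableType d)
  (P : probability T R) (Nn : nat -> nat)
  (W : forall m, 'M[R[i]]_(Nn m.+1, Nn m))
  (A : forall m, {set {set 'I_(Nn m)}})
  (X : T -> 'cV[R]_(Nn 0)) :
  (forall m, (0 < Nn m)%N) ->
  (forall m, adjoint_isometry (W m)) ->
  (forall m, block_partition (A m)) ->
  (forall i, measurable_fun setT (fun t => X t i 0)) ->
  P.-integrable setT (fun t => (sqnorm (X t))%:E) ->
  forall m : nat,
    (\int[P]_t (sqnorm (block_avg (A m) (avg_layer W A X m t)
                         - Evec P (exp_layer P W X m)))%:E
     <= (\sum_(n < m.+1)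
           sqrte (\int[P]_t (sqnorm (block_avg (A n) (exp_layer P W X n t)
                                     - Evec P (exp_layer P W X n)))%:E))
        * (\sum_(n < m.+1)
           sqrte (\int[P]_t (sqnorm (block_avg (A n) (exp_layer P W X n t)
                                     - Evec P (exp_layer P W X n)))%:E)))%E.
Proof.
move=> _ isoW partA mX _ m.
rewrite integral_sqnorm; under eq_bigr do rewrite -rms_vnorm.
have le_m := rms_avg_dev_le P isoW partA mX m.
by apply: lee_pmul => //; exact: rms_ge0.
Qed.
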